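(* Let $E$ be a regular biordered set satisfying: (E1) there exists an element $0\in E$ such that $0\,\omega\,e$ for every $e\in E$; (E2) there exists a map $E\to E$, $e\mapsto e'$, such that for all $e,f\in E$: (i) $(e')'=e$; (ii) $f\,\omega^l\,e$ if and only if $e'\,\omega^r\,f'$; (iii) $f\,\omega^l\,e'$ if and only if $M(f,e)=\{0\}$. Then there exists a strongly regular Baer semigroup $S$ such that $E$ is (isomorphic to) the biordered set of idempotents of $S$.
   Context: For a semigroup $S$, its biordered set $E(S)$ is the set of idempotents of $S$ regarded as a partial algebra: for $e,f\in E(S)$ the product $ef$ (computed in $S$) is defined exactly when $\{ef,fe\}\cap\{e,f\}\neq\emptyset$. A semigroup is regular if for every $x$ there is $y$ with $xyx=x$. A regular biordered set is a partial algebra isomorphic to $E(S)$ for some regular semigroup $S$ (equivalently, a biordered set in Nambooripad's axiomatic sense satisfying the regularity axiom). In a biordered set $E$: $\omega^l=\{(e,f): ef=e\}$, $\omega^r=\{(e,f): fe=e\}$, $\omega=\omega^l\cap\omega^r$; $M(e,f)=\{g\in E: g\,\omega^l\,e \text{ and } g\,\omega^r\,f\}$. For a semigroup $S$ with zero $0$, the left annihilator of $s$ is $\{x\in S: xs=0\}$ and the right annihilator is $\{x\in S: sx=0\}$. $S$ is a strongly regular Baer semigroup if the set of left annihilators of elements of $S$ equals the set of principal left ideals of $S$, and the set of right annihilators of elements of $S$ equals the set of principal right ideals of $S$. *)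

Record semigroup := Semigroup {
  sg_car :> Type;
  sg_op : sg_car -> sg_car -> sg_car;
  sg_assoc : forall x y z, sg_op x (sg_op y z) = sg_op (sg_op x y) z
}.

Definition regular_semigroup (S : semigroup) : Prop :=
  forall x : S, exists y : S, sg_op S (sg_op S x y) x = x.

Definition idempotent (S : semigroup) (x : S) : Prop := sg_op S x x = x.

(** Partial algebras with one binary partial operation, given by the graph
    of the operation: [pa_prod e f g] means "ef is defined and equals g". *)
Record partial_algebra := PartialAlgebra {
  pa_car :> Type;
  pa_prod : pa_car -> pa_car -> pa_car -> Prop
}.

(** The biordered set E(S) of a semigroup S: idempotents, with ef defined
    exactly when {ef, fe} meets {e, f}. *)
Definition biordered_of (S : semigroup) : partial_algebra :=
  PartialAlgebra {x : S | idempotent S x}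
    (fun e f g =>
       (sg_op S (proj1_sig e) (proj1_sig f) = proj1_sig e \/
        sg_op S (proj1_sig e) (proj1_sig f) = proj1_sig f \/
        sg_op S (proj1_sig f) (proj1_sig e) = proj1_sig e \/
        sg_op S (proj1_sig f) (proj1_sig e) = proj1_sig f) /\
       proj1_sig g = sg_op S (proj1_sig e) (proj1_sig f)).

Definition pa_iso (A B : partial_algebra) : Prop :=
  exists (phi : A -> B) (psi : B -> A),
    (forall a, psi (phi a) = a) /\ (forall b, phi (psi b) = b) /\
    (forall e f g, pa_prod A e f g <-> pa_prod B (phi e) (phi f) (phi g)).

Definition regular_biordered_set (E : partial_algebra) : Prop :=
  exists S : semigroup, regular_semigroup S /\ pa_iso E (biordered_of S).

Definition omega_l (E : partial_algebra) (e f : E) : Prop := pa_prod E e f e.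
Definition omega_r (E : partial_algebra) (e f : E) : Prop := pa_prod E f e e.
Definition omega (E : partial_algebra) (e f : E) : Prop :=
  omega_l E e f /\ omega_r E e f.

Definition M_set (E : partial_algebra) (e f : E) (g : E) : Prop :=
  omega_l E g e /\ omega_r E g f.

Definition is_zero (S : semigroup) (z : S) : Prop :=
  forall x : S, sg_op S z x = z /\ sg_op S x z = z.

Definition left_ann (S : semigroup) (z s : S) (x : S) : Prop := sg_op S x s = z.
Definition right_ann (S : semigroup) (z s : S) (x : S) : Prop := sg_op S s x = z.

Definition princ_left (S : semigroup) (a : S) (x : S) : Prop :=
  x = a \/ exists y : S, x = sg_op S y a.
Definition princ_right (S : semigroup) (a : S) (x : S) : Prop :=
  x = a \/ exists y : S, x = sg_op S a y.

Definition same_set {T : Type} (A B : T -> Prop) : Prop := forall x, A x <-> B x.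

Definition strongly_regular_Baer (S : semigroup) (z : S) : Prop :=
  is_zero S z /\
  (forall s : S, exists a : S, same_set (left_ann S z s) (princ_left S a)) /\
  (forall a : S, exists s : S, same_set (left_ann S z s) (princ_left S a)) /\
  (forall s : S, exists a : S, same_set (right_ann S z s) (princ_right S a)) /\
  (forall a : S, exists s : S, same_set (right_ann S z s) (princ_right S a)).

From Stdlib Require Import Classical ClassicalEpsilon ProofIrrelevance.

(* (E1), transported to a regular semigroup S with E(S) = E, gives a least idempotent 0 of S.
   It is central: for h = u 0, an inverse a of 0 h and b = 0 a 0, we have b h = 0 (a 0 h) and
   h b = (h b) 0 with a 0 h and h b idempotent, so b h = h b = 0 and
   0 u 0 = 0 h = h b h = h 0 = u 0; dually 0 u 0 = 0 u.  Hence S 0 is an ideal whose only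
   idempotent is 0, and the Rees quotient S / S 0 is a regular semigroup with zero with the
   same biordered set.

   In a regular semigroup with zero satisfying (E1)-(E2), an inverse v of f e shows that
   M(f, e) = {0} exactly when f e = 0.  For x with x t x = x, the idempotent t x then gives
   x e = 0 <-> (t x) e = 0 <-> t x ω^l e' <-> x e' = x, so the left annihilator of s is the
   principal left ideal of (s t)' and the principal left ideal of a is the left annihilator
   of (t a)'.  The dual semigroup satisfies (E1)-(E2) with the same 0 and complementation,
   which gives the right-hand conditions. *)

Local Infix "·" := (sg_op _) (at level 40, left associativity).
Local Notation val := (@proj1_sig _ _).

Lemma sig_val_inj {A : Type} {P : A -> Prop} (x y : {a | P a}) : val x = val y -> x = y.
Proof. apply eq_sig_hprop; intros; apply proof_irrelevance. Qed.

Section SemigroupFacts.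
Variable S : semigroup.
Implicit Types x y t a e f : S.

Lemma idempotent_mul_inner x t : x · t · x = x -> idempotent S (t · x).
Proof.
  intro Ht; unfold idempotent.
  transitivity (t · (x · t · x)); [rewrite !sg_assoc; reflexivity | now rewrite Ht].
Qed.

Lemma idempotent_mul_outer x t : x · t · x = x -> idempotent S (x · t).
Proof.
  intro Ht; unfold idempotent.
  transitivity (x · t · x · t); [rewrite !sg_assoc; reflexivity | now rewrite Ht].
Qed.

Lemma regular_inverse x : regular_semigroup S -> exists v, x · v · x = x /\ v · x · v = v.
Proof.
  intro S_regular; destruct (S_regular x) as [t Ht].
  exists (t · x · t); split.
  - transitivity (x · t · x · t · x); [rewrite !sg_assoc; reflexivity | now rewrite !Ht].
  - transitivity (t · (x · t · x) · t · x · t); [rewrite !sg_assoc; reflexivity|].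
    rewrite Ht; transitivity (t · (x · t · x) · t);
      [rewrite !sg_assoc; reflexivity | now rewrite Ht].
Qed.

Lemma idempotent_basic_product e f :
  idempotent S e -> idempotent S f ->
  (e · f = e \/ e · f = f \/ f · e = e \/ f · e = f) -> idempotent S (e · f).
Proof.
  unfold idempotent; intros He Hf [D | [D | [D | D]]]; rewrite ?D; try assumption;
    transitivity (e · (f · e) · f); try (rewrite !sg_assoc; reflexivity); rewrite D.
  - now rewrite He.
  - now rewrite <- sg_assoc, Hf.
Qed.

Lemma regular_mul_fix x t y : x · t · x = x -> x · y = x <-> t · x · y = t · x.
Proof.
  intro Ht; split; intro H.
  - now rewrite <- sg_assoc, H.
  - transitivity (x · (t · x · y)); [rewrite !sg_assoc, Ht; reflexivity|].
    now rewrite H, sg_assoc.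
Qed.

Lemma regular_mul_zero o x t y :
  is_zero S o -> x · t · x = x -> x · y = o <-> t · x · y = o.
Proof.
  intros o_zero Ht; split; intro H.
  - rewrite <- sg_assoc, H; apply o_zero.
  - transitivity (x · (t · x · y)); [rewrite !sg_assoc, Ht; reflexivity|].
    rewrite H; apply o_zero.
Qed.

Lemma princ_left_regular a t x : a · t · a = a -> princ_left S a x <-> x · (t · a) = x.
Proof.
  intro Ht; split.
  - intros [-> | [y ->]].
    + now rewrite sg_assoc, Ht.
    + transitivity (y · (a · t · a)); [rewrite !sg_assoc; reflexivity | now rewrite Ht].
  - intro H; right; exists (x · t); now rewrite <- sg_assoc, H.
Qed.

Lemma princ_left_idempotent a x : idempotent S a -> princ_left S a x <-> x · a = x.
Proof.
  unfold idempotent; intro Ha; rewrite (princ_left_regular a a x); rewrite ?Ha; reflexivity.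
Qed.

Lemma left_ann_regular o s t x :
  is_zero S o -> s · t · s = s -> left_ann S o s x <-> x · (s · t) = o.
Proof.
  unfold left_ann; intros o_zero Ht; split; intro H.
  - rewrite sg_assoc, H; apply o_zero.
  - rewrite <- Ht, !sg_assoc, <- (sg_assoc _ x), H; apply o_zero.
Qed.

End SemigroupFacts.

Definition dual (S : semigroup) : semigroup :=
  Semigroup S (fun x y => sg_op S y x) (fun x y z => eq_sym (sg_assoc S z y x)).

Lemma regular_dual S : regular_semigroup S -> regular_semigroup (dual S).
Proof.
  intros S_regular x; destruct (S_regular x) as [y Hy]; exists y; simpl.
  now rewrite sg_assoc.
Qed.

Lemma is_zero_dual S o : is_zero S o -> is_zero (dual S) o.
Proof. intros o_zero x; simpl; split; apply o_zero. Qed.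

Section ReesQuotient.
Variables (S : semigroup) (I : S -> Prop) (z : S).
Hypothesis I_z : I z.
Hypothesis I_mul_l : forall y w, I w -> I (y · w).
Hypothesis I_mul_r : forall y w, I w -> I (w · y).

(* [S / I] is modelled as the elements outside [I] together with the representative [z]. *)
Definition collapse (w : S) : S := if excluded_middle_informative (I w) then z else w.

Lemma collapse_in w : I w -> collapse w = z.
Proof. unfold collapse; destruct excluded_middle_informative; tauto. Qed.

Lemma collapse_out w : ~ I w -> collapse w = w.
Proof. unfold collapse; destruct excluded_middle_informative; tauto. Qed.

Lemma collapse_spec w : I (collapse w) -> collapse w = z.
Proof. unfold collapse; destruct excluded_middle_informative; tauto. Qed.

Lemma collapse_id w : (I w -> w = z) -> collapse w = w.
Proof.
  intro Hw; destruct (classic (I w)) as [Iw | Iw].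
  - rewrite collapse_in by exact Iw; symmetry; auto.
  - now apply collapse_out.
Qed.

Lemma collapse_mul_l u v : collapse (collapse u · v) = collapse (u · v).
Proof.
  destruct (classic (I u)) as [Iu | Iu].
  - rewrite (collapse_in u Iu), !collapse_in; auto.
  - now rewrite (collapse_out u Iu).
Qed.

Lemma collapse_mul_r u v : collapse (u · collapse v) = collapse (u · v).
Proof.
  destruct (classic (I v)) as [Iv | Iv].
  - rewrite (collapse_in v Iv), !collapse_in; auto.
  - now rewrite (collapse_out v Iv).
Qed.

Definition rees_quotient : semigroup.
Proof.
  refine (Semigroup {x : S | I x -> x = z}
            (fun x y => exist _ (collapse (val x · val y)) (collapse_spec _)) _).
  intros x y w; apply sig_val_inj; simpl.
  now rewrite collapse_mul_l, collapse_mul_r, sg_assoc.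
Defined.

Definition rees_zero : rees_quotient := exist _ z (fun _ => eq_refl).

Lemma rees_is_zero : is_zero rees_quotient rees_zero.
Proof. intro x; split; apply sig_val_inj, collapse_in; auto. Qed.

Lemma rees_regular : regular_semigroup S -> regular_semigroup rees_quotient.
Proof.
  intros S_regular x; destruct (S_regular (val x)) as [t Ht].
  exists (exist _ (collapse t) (collapse_spec t)); apply sig_val_inj; simpl.
  rewrite collapse_mul_l.
  destruct (classic (I t)) as [It | It].
  - rewrite (collapse_in t It), collapse_in by auto.
    symmetry; apply (proj2_sig x); rewrite <- Ht; auto.
  - rewrite (collapse_out t It), Ht; apply collapse_id, proj2_sig.
Qed.

End ReesQuotient.

Lemma min_idempotent_conj_r (S : semigroup) (z u : S) :
  regular_semigroup S -> idempotent S z ->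
  (forall g, idempotent S g -> z · g = z) -> (forall g, idempotent S g -> g · z = z) ->
  z · u · z = u · z.
Proof.
  intros S_regular z_idem z_min_l z_min_r.
  set (h := u · z).
  assert (hz : h · z = h) by (unfold h; now rewrite <- sg_assoc, z_idem).
  destruct (S_regular (z · h)) as [a Ha].
  set (b := z · a · z).
  assert (bh : b · h = z).
  { transitivity (z · (a · (z · h))); [unfold b; rewrite !sg_assoc; reflexivity|].
    apply z_min_l, idempotent_mul_inner, Ha. }
  assert (hb : h · b = z).
  { assert (hb_idem : idempotent S (h · b)).
    { unfold idempotent; transitivity (h · (b · h) · b); [rewrite !sg_assoc; reflexivity|].
      now rewrite bh, hz. }
    rewrite <- (z_min_r _ hb_idem).
    unfold b; now rewrite <- !sg_assoc, z_idem. }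
  transitivity (z · h); [unfold h; rewrite !sg_assoc; reflexivity|].
  rewrite <- hb at 1; now rewrite <- sg_assoc, bh, hz.
Qed.

Section MinimumIdempotent.
Variables (S : semigroup) (z : S).
Hypothesis S_regular : regular_semigroup S.
Hypothesis z_idem : idempotent S z.
Hypothesis z_min_l : forall g, idempotent S g -> z · g = z.
Hypothesis z_min_r : forall g, idempotent S g -> g · z = z.

Lemma min_idempotent_central u : z · u = u · z.
Proof.
  pose proof (min_idempotent_conj_r (dual S) z u (regular_dual S S_regular)
                z_idem z_min_r z_min_l) as conj_l.
  simpl in conj_l; rewrite sg_assoc in conj_l.
  now rewrite <- conj_l, min_idempotent_conj_r.
Qed.

Definition kernel (w : S) : Prop := z · w = w.

Lemma kernel_z : kernel z.
Proof. exact z_idem. Qed.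

Lemma kernel_mul_l y w : kernel w -> kernel (y · w).
Proof. unfold kernel; intro Hw; now rewrite sg_assoc, min_idempotent_central, <- sg_assoc, Hw. Qed.

Lemma kernel_mul_r y w : kernel w -> kernel (w · y).
Proof. unfold kernel; intro Hw; now rewrite sg_assoc, Hw. Qed.

Lemma kernel_idempotent g : idempotent S g -> kernel g -> g = z.
Proof. unfold kernel; intros Hg Kg; rewrite <- Kg; apply z_min_l, Hg. Qed.

Definition kernel_quotient : semigroup :=
  rees_quotient S kernel z kernel_z kernel_mul_l kernel_mul_r.

Local Notation collapse := (collapse S kernel z).

Lemma kernel_quotient_eq_iff (x y : kernel_quotient) : x = y <-> val x = val y.
Proof. split; [now intros -> | apply sig_val_inj]. Qed.

Lemma collapse_idempotent g : idempotent S g -> collapse g = g.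
Proof. intro Hg; apply collapse_id; intro; now apply kernel_idempotent. Qed.

Lemma collapse_mul_idempotent_l e f :
  idempotent S e -> idempotent S f -> collapse (e · f) = e <-> e · f = e.
Proof.
  intros He Hf; split; intro H.
  - destruct (classic (kernel (e · f))) as [K | K].
    + rewrite collapse_in in H by exact K; subst e; apply z_min_l, Hf.
    + now rewrite collapse_out in H.
  - now rewrite H, collapse_idempotent.
Qed.

Lemma collapse_mul_idempotent_r e f :
  idempotent S e -> idempotent S f -> collapse (e · f) = f <-> e · f = f.
Proof.
  intros He Hf; split; intro H.
  - destruct (classic (kernel (e · f))) as [K | K].
    + rewrite collapse_in in H by exact K; subst f; apply z_min_r, He.
    + now rewrite collapse_out in H.
  - now rewrite H, collapse_idempotent.
Qed.

Lemma idempotent_kernel_quotient (q : kernel_quotient) :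
  idempotent kernel_quotient q <-> idempotent S (val q).
Proof.
  unfold idempotent; rewrite kernel_quotient_eq_iff; simpl; split; intro H.
  - destruct (classic (kernel (val q · val q))) as [K | K].
    + rewrite collapse_in in H by exact K; now rewrite <- H.
    + now rewrite collapse_out in H.
  - now rewrite H, collapse_idempotent.
Qed.

Definition to_kernel_quotient (e : biordered_of S) : biordered_of kernel_quotient :=
  let q : kernel_quotient := exist _ (val e) (kernel_idempotent _ (proj2_sig e)) in
  exist _ q (proj2 (idempotent_kernel_quotient q) (proj2_sig e)).

Definition of_kernel_quotient (q : biordered_of kernel_quotient) : biordered_of S :=
  exist _ (val (val q)) (proj1 (idempotent_kernel_quotient _) (proj2_sig q)).

Lemma biordered_kernel_quotient_iso :
  pa_iso (biordered_of S) (biordered_of kernel_quotient).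
Proof.
  exists to_kernel_quotient, of_kernel_quotient; split; [|split].
  - intro e; now apply sig_val_inj.
  - intro q; now apply sig_val_inj, sig_val_inj.
  - intros [e He] [f Hf] [g Hg]; simpl; rewrite !kernel_quotient_eq_iff; simpl.
    rewrite (collapse_mul_idempotent_l e f), (collapse_mul_idempotent_r e f),
      (collapse_mul_idempotent_l f e), (collapse_mul_idempotent_r f e) by assumption.
    assert (basic : e · f = e \/ e · f = f \/ f · e = e \/ f · e = f ->
                    collapse (e · f) = e · f)
      by (intro; apply collapse_idempotent, idempotent_basic_product; assumption).
    split; intros [D G]; split; try exact D; rewrite basic in *; assumption.
Qed.

End MinimumIdempotent.

Definition baer_biordered (E : partial_algebra) : Prop :=
  exists z : E,
    (forall e : E, omega E z e) /\
    exists c : E -> E,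
      (forall e, c (c e) = e) /\
      (forall e f, omega_l E f e <-> omega_r E (c e) (c f)) /\
      (forall e f, omega_l E f (c e) <-> same_set (M_set E f e) (fun g => g = z)).

Lemma omega_l_biordered (S : semigroup) (e f : biordered_of S) :
  omega_l _ e f <-> val e · val f = val e.
Proof.
  unfold omega_l; simpl; split.
  - intros [_ H]; now symmetry.
  - intro H; split; [left | symmetry]; exact H.
Qed.

Lemma omega_r_biordered (S : semigroup) (e f : biordered_of S) :
  omega_r _ e f <-> val f · val e = val e.
Proof.
  unfold omega_r; simpl; split.
  - intros [_ H]; now symmetry.
  - intro H; split; [right; left | symmetry]; exact H.
Qed.

Lemma biordered_min_l (S : semigroup) (z : biordered_of S) :
  (forall e, omega _ z e) -> forall g, idempotent S g -> val z · g = val z.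
Proof. intros z_min g Hg; apply (omega_l_biordered S z (exist _ g Hg)), z_min. Qed.

Lemma biordered_min_r (S : semigroup) (z : biordered_of S) :
  (forall e, omega _ z e) -> forall g, idempotent S g -> g · val z = val z.
Proof. intros z_min g Hg; apply (omega_r_biordered S z (exist _ g Hg)), z_min. Qed.

Section Transport.
Variables (E F : partial_algebra) (phi : E -> F) (psi : F -> E).
Hypothesis psi_phi : forall a, psi (phi a) = a.
Hypothesis phi_psi : forall b, phi (psi b) = b.
Hypothesis phi_prod : forall e f g, pa_prod E e f g <-> pa_prod F (phi e) (phi f) (phi g).

Lemma psi_prod e f g : pa_prod F e f g <-> pa_prod E (psi e) (psi f) (psi g).
Proof. now rewrite phi_prod, !phi_psi. Qed.

Lemma M_set_transport f e g : M_set F f e g <-> M_set E (psi f) (psi e) (psi g).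
Proof. unfold M_set, omega_l, omega_r; now rewrite !psi_prod. Qed.

Lemma baer_biordered_transport : baer_biordered E -> baer_biordered F.
Proof.
  intros [z [z_min [c [c_invol [c_omega c_M]]]]].
  exists (phi z); split.
  - intro e; unfold omega, omega_l, omega_r; rewrite !psi_prod, psi_phi; apply z_min.
  - exists (fun e => phi (c (psi e))); split; [|split].
    + intro e; now rewrite psi_phi, c_invol, phi_psi.
    + intros e f; unfold omega_l, omega_r; rewrite !psi_prod, !psi_phi; apply c_omega.
    + intros e f; unfold omega_l; rewrite psi_prod, !psi_phi; fold (omega_l E (psi f) (c (psi e))).
      rewrite c_M; split; intros H g.
      * rewrite M_set_transport, (H (psi g)).
        split; [intros <-; symmetry; apply phi_psi | intros ->; apply psi_phi].
      * rewrite <- (psi_phi g), <- M_set_transport, (H (phi g)), psi_phi.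
        split; [intro Hg; now rewrite <- (psi_phi g), Hg, psi_phi | now intros ->].
Qed.

End Transport.

Lemma pa_iso_baer_biordered E F : pa_iso E F -> baer_biordered E -> baer_biordered F.
Proof.
  intros [phi [psi [psi_phi [phi_psi phi_prod]]]].
  exact (baer_biordered_transport E F phi psi psi_phi phi_psi phi_prod).
Qed.

Lemma pa_iso_trans E F G : pa_iso E F -> pa_iso F G -> pa_iso E G.
Proof.
  intros [phi1 [psi1 [H1 [H2 H3]]]] [phi2 [psi2 [K1 [K2 K3]]]].
  exists (fun a => phi2 (phi1 a)), (fun c => psi1 (psi2 c)); split; [|split].
  - intro a; now rewrite K1, H1.
  - intro c; now rewrite H2, K2.
  - intros e f g; now rewrite H3, K3.
Qed.

Lemma omega_l_dual (S : semigroup) (e f : biordered_of S) :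
  omega_l (biordered_of (dual S)) e f <-> omega_r (biordered_of S) e f.
Proof. rewrite (omega_l_biordered (dual S)), omega_r_biordered; reflexivity. Qed.

Lemma omega_r_dual (S : semigroup) (e f : biordered_of S) :
  omega_r (biordered_of (dual S)) e f <-> omega_l (biordered_of S) e f.
Proof. rewrite (omega_r_biordered (dual S)), omega_l_biordered; reflexivity. Qed.

Lemma baer_biordered_dual S :
  baer_biordered (biordered_of S) -> baer_biordered (biordered_of (dual S)).
Proof.
  intros [z [z_min [c [c_invol [c_omega c_M]]]]].
  exists z; split.
  - intro e; split; [apply omega_l_dual | apply omega_r_dual]; apply z_min.
  - exists c; split; [exact c_invol | split].
    + intros e f; rewrite omega_l_dual, omega_r_dual, c_omega, !c_invol; reflexivity.
    + intros e f; rewrite omega_l_dual.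
      assert (M_swap : same_set (M_set (biordered_of (dual S)) f e) (M_set (biordered_of S) e f)).
      { intro g; unfold M_set; rewrite omega_l_dual, omega_r_dual; tauto. }
      rewrite <- (c_invol f) at 1; rewrite <- c_omega, c_M.
      split; intros H g; specialize (H g); specialize (M_swap g); tauto.
Qed.

Definition left_Baer (S : semigroup) (o : S) : Prop :=
  (forall s : S, exists a : S, same_set (left_ann S o s) (princ_left S a)) /\
  (forall a : S, exists s : S, same_set (left_ann S o s) (princ_left S a)).

(* The right-hand conditions for [S] are, by conversion, the left-hand ones for [dual S]. *)
Lemma strongly_regular_Baer_of_left_Baer (S : semigroup) (o : S) :
  is_zero S o -> left_Baer S o -> left_Baer (dual S) o -> strongly_regular_Baer S o.
Proof.
  intros o_zero [ann_princ princ_ann] [ann_princ' princ_ann'].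
  exact (conj o_zero (conj ann_princ (conj princ_ann (conj ann_princ' princ_ann')))).
Qed.

Section LeftBaer.
Variables (Q : semigroup) (o : Q).
Hypothesis Q_regular : regular_semigroup Q.
Hypothesis o_zero : is_zero Q o.
Variables (z : biordered_of Q) (c : biordered_of Q -> biordered_of Q).
Hypothesis z_min : forall e, omega _ z e.
Hypothesis c_invol : forall e, c (c e) = e.
Hypothesis c_M : forall e f, omega_l _ f (c e) <-> same_set (M_set _ f e) (fun g => g = z).

Lemma min_idempotent_zero : val z = o.
Proof. rewrite <- (biordered_min_l Q z z_min o (proj1 (o_zero o))); apply o_zero. Qed.

Lemma M_set_trivial_iff (f e : biordered_of Q) :
  same_set (M_set _ f e) (fun g => g = z) <-> val f · val e = o.
Proof.
  assert (Hf : val f · val f = val f) by exact (proj2_sig f).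
  assert (He : val e · val e = val e) by exact (proj2_sig e).
  split.
  - intro HM.
    destruct (regular_inverse Q (val f · val e) Q_regular) as [v [Hv1 Hv2]].
    assert (h_idem : idempotent Q (val e · v · val f)).
    { unfold idempotent; transitivity (val e · (v · (val f · val e) · v) · val f);
        [rewrite !sg_assoc; reflexivity | now rewrite Hv2]. }
    assert (h_zero : val e · v · val f = o).
    { rewrite <- min_idempotent_zero.
      apply (f_equal (@proj1_sig _ _) (x := exist (fun x => idempotent Q x) _ h_idem)), HM.
      unfold M_set; rewrite omega_l_biordered, omega_r_biordered; simpl; split.
      - now rewrite <- sg_assoc, Hf.
      - now rewrite !sg_assoc, He. }
    rewrite <- Hv1; transitivity (val f · (val e · v · val f) · val e);
      [rewrite !sg_assoc; reflexivity|].
    rewrite h_zero, (proj2 (o_zero (val f))); apply o_zero.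
  - intros Hfe g; unfold M_set; rewrite omega_l_biordered, omega_r_biordered; split.
    + intros [Hgf Heg]; apply sig_val_inj; rewrite min_idempotent_zero.
      transitivity (val g · val f · (val e · val g));
        [rewrite Hgf, Heg; symmetry; exact (proj2_sig g)|].
      transitivity (val g · (val f · val e) · val g); [rewrite !sg_assoc; reflexivity|].
      rewrite Hfe, (proj2 (o_zero (val g))); apply o_zero.
    + intros ->; rewrite min_idempotent_zero; split; apply o_zero.
Qed.

Lemma mul_eq_zero_iff_compl (e : biordered_of Q) (x : Q) :
  x · val e = o <-> x · val (c e) = x.
Proof.
  destruct (Q_regular x) as [t Ht].
  rewrite (regular_mul_zero Q o x t _ o_zero Ht), (regular_mul_fix Q x t _ Ht).
  set (f := exist (fun y => idempotent Q y) (t · x) (idempotent_mul_inner Q x t Ht)).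
  change (val f · val e = o <-> val f · val (c e) = val f).
  now rewrite <- M_set_trivial_iff, <- c_M, omega_l_biordered.
Qed.

Lemma left_ann_principal s : exists a, same_set (left_ann Q o s) (princ_left Q a).
Proof.
  destruct (Q_regular s) as [t Ht].
  set (e := exist (fun y => idempotent Q y) (s · t) (idempotent_mul_outer Q s t Ht)).
  exists (val (c e)); intro x.
  rewrite (left_ann_regular Q o s t x o_zero Ht), (princ_left_idempotent Q _ x (proj2_sig (c e))).
  exact (mul_eq_zero_iff_compl e x).
Qed.

Lemma principal_left_ann a : exists s, same_set (left_ann Q o s) (princ_left Q a).
Proof.
  destruct (Q_regular a) as [t Ht].
  set (f := exist (fun y => idempotent Q y) (t · a) (idempotent_mul_inner Q a t Ht)).
  exists (val (c f)); intro x.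
  rewrite (princ_left_regular Q a t x Ht); unfold left_ann.
  now rewrite mul_eq_zero_iff_compl, c_invol.
Qed.

End LeftBaer.

Lemma left_Baer_of_baer_biordered (Q : semigroup) (o : Q) :
  regular_semigroup Q -> is_zero Q o -> baer_biordered (biordered_of Q) -> left_Baer Q o.
Proof.
  intros Q_regular o_zero [z [z_min [c [c_invol [_ c_M]]]]]; split.
  - exact (left_ann_principal Q o Q_regular o_zero z c z_min c_M).
  - exact (principal_left_ann Q o Q_regular o_zero z c z_min c_invol c_M).
Qed.

Lemma strongly_regular_Baer_of_baer_biordered (Q : semigroup) (o : Q) :
  regular_semigroup Q -> is_zero Q o -> baer_biordered (biordered_of Q) ->
  strongly_regular_Baer Q o.
Proof.
  intros Q_regular o_zero HQ; apply strongly_regular_Baer_of_left_Baer.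
  - exact o_zero.
  - now apply left_Baer_of_baer_biordered.
  - apply left_Baer_of_baer_biordered;
      [apply regular_dual | apply is_zero_dual | apply baer_biordered_dual]; assumption.
Qed.

Theorem theorem3p1 (E : partial_algebra) :
  regular_biordered_set E ->
  (exists z : E,
     (forall e : E, omega E z e) /\
     exists c : E -> E,
       (forall e, c (c e) = e) /\
       (forall e f, omega_l E f e <-> omega_r E (c e) (c f)) /\
       (forall e f, omega_l E f (c e) <-> same_set (M_set E f e) (fun g => g = z))) ->
  exists (S : semigroup) (z0 : S),
    strongly_regular_Baer S z0 /\ pa_iso E (biordered_of S).
Proof.
  intros [S [S_regular iso_ES]] HE.
  destruct (pa_iso_baer_biordered _ _ iso_ES HE) as [z [z_min _]].
  set (Q := kernel_quotient S (val z) S_regular (proj2_sig z)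
              (biordered_min_l S z z_min) (biordered_min_r S z z_min)).
  assert (iso_EQ : pa_iso E (biordered_of Q))
    by exact (pa_iso_trans _ _ _ iso_ES (biordered_kernel_quotient_iso _ _ _ _ _ _)).
  exists Q, (rees_zero _ _ _ _ _ _); split; [|exact iso_EQ].
  apply strongly_regular_Baer_of_baer_biordered.
  - apply rees_regular, S_regular.
  - apply rees_is_zero.
  - exact (pa_iso_baer_biordered _ _ iso_EQ HE).
Qed.
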